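(* If $s,t\in\Sigma^n$ and $d:\Sigma^n\to\Sigma$ is a depth assignment, then \[D\left(P\left(H(s)+e_{d_s}\right)-P\left(H(t)+e_{d_t}\right)\right)\le n+1.\]
   Context: Let $k\ge 1$ be an integer, $\Sigma=\{0,1,\dots,k-1\}$, $n\ge 1$. A depth assignment is any function $d:\Sigma^n\to\Sigma$, written $s\mapsto d_s$. The histogram $H(s):\Sigma\to\mathbb{Z}$ of a string $s$ gives the number of occurrences of each symbol in $s$; $e_b$ is the indicator function of $b\in\Sigma$. For $H:\Sigma\to\mathbb{Z}$, the partial sum is $P(H)(i)=\sum_{j=0}^{i}H(j)$ and the difference is $D(H)=\max_{i,j\in\Sigma}(H(i)-H(j))$. *)

From mathcomp Require Import all_boot all_order all_algebra.
Set Implicit Arguments. Unset Strict Implicit. Unset Printing Implicit Defensive.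
Import Order.TTheory GRing.Theory Num.Theory.
Local Open Scope ring_scope.

(* Alphabet Sigma = {0,...,k-1} is 'I_k; strings in Sigma^n are n.-tuple 'I_k. *)

Definition hist (k n : nat) (s : n.-tuple 'I_k) : 'I_k -> int :=
  fun b => (count_mem b s)%:Z.

Definition indic (k : nat) (b : 'I_k) : 'I_k -> int :=
  fun i => (i == b)%:Z.

Definition fadd (k : nat) (F G : 'I_k -> int) : 'I_k -> int := fun i => F i + G i.
Definition fsub (k : nat) (F G : 'I_k -> int) : 'I_k -> int := fun i => F i - G i.

Definition psum (k : nat) (F : 'I_k -> int) : 'I_k -> int :=
  fun i => \sum_(j < k | (j <= i)%N) F j.

(* Difference D(H) = max_{i,j in Sigma} (H(i) - H(j)).  The fold starts at 0,
   which is harmless: for nonempty Sigma the max is >= H(i)-H(i) = 0. *)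
Definition Dmax (k : nat) (F : 'I_k -> int) : int :=
  \big[Order.max/0]_(i < k) \big[Order.max/0]_(j < k) (F i - F j).

(* Both H(s) + e_(d_s) and H(t) + e_(d_t) are nonnegative with total mass
   n + 1, so their partial sums are nondecreasing and every increment
   P(j) - P(i) with i <= j lies in [0, n + 1].  Writing A, B for the two
   partial sums, (A i - B i) - (A j - B j) is a difference of two such
   increments, hence at most n + 1 in absolute value. *)

From mathcomp Require Import all_boot all_order all_algebra.
From mathcomp Require Import zify.
Set Implicit Arguments. Unset Strict Implicit. Unset Printing Implicit Defensive.
Import Order.TTheory GRing.Theory Num.Theory.
Local Open Scope ring_scope.

Lemma sum_count_mem (T : finType) (s : seq T) :
  (\sum_(x : T) count_mem x s)%N = size s.
Proof.
elim: s => [|y s IHs] /=; first by rewrite big1.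
rewrite big_split /= IHs (bigD1 y) //= eqxx big1 // => x /negbTE.
by rewrite eq_sym => ->.
Qed.

Lemma sum_hist_indic (k n : nat) (s : n.-tuple 'I_k) (b : 'I_k) :
  \sum_l fadd (hist s) (indic b) l = (n + 1)%:Z.
Proof.
rewrite /fadd /hist /indic big_split /= -(big_morph _ PoszD (erefl 0%:Z)).
rewrite sum_count_mem size_tuple (bigD1 b) //= eqxx big1 ?addr0 //.
by move=> l /negbTE ->.
Qed.

Lemma psum_subE (k : nat) (F : 'I_k -> int) (i j : 'I_k) : (i <= j)%N ->
  psum F j - psum F i = \sum_(l < k | (i < l <= j)%N) F l.
Proof.
move=> le_ij; rewrite /psum (bigID (fun l : 'I_k => (l <= i)%N)) /=.
have -> : \sum_(l < k | (l <= j)%N && (l <= i)%N) F l =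
          \sum_(l < k | (l <= i)%N) F l.
  apply: eq_bigl => l; case: (leqP l i) => [le_li | _]; last by rewrite andbF.
  by rewrite (leq_trans le_li le_ij).
rewrite addrC addrK; apply: eq_bigl => l.
by rewrite andbC -ltnNge.
Qed.

Lemma psum_sub_bounds (k : nat) (F : 'I_k -> int) (i j : 'I_k) :
  (forall l, 0 <= F l) -> (i <= j)%N ->
  0 <= psum F j - psum F i <= \sum_l F l.
Proof.
move=> F_ge0 /psum_subE ->; rewrite sumr_ge0 //=.
by rewrite [leRHS](bigID (fun l : 'I_k => (i < l <= j)%N)) /= lerDl sumr_ge0.
Qed.

Lemma Dmax_le (k : nat) (F : 'I_k -> int) (c : int) :
  0 <= c -> (forall i j, F i - F j <= c) -> Dmax F <= c.
Proof.
by move=> c_ge0 Fc; do 2!apply: bigmax_le => // ? _.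
Qed.

Lemma Dmax_psum_sub_le (k : nat) (F G : 'I_k -> int) (N : int) :
  (forall l, 0 <= F l) -> (forall l, 0 <= G l) ->
  \sum_l F l <= N -> \sum_l G l <= N ->
  Dmax (fsub (psum F) (psum G)) <= N.
Proof.
move=> F_ge0 G_ge0 FN GN; apply: Dmax_le => [|i j].
  exact: le_trans (sumr_ge0 _ (fun l _ => F_ge0 l)) FN.
rewrite /fsub; case: (leqP i j) => [le_ij | /ltnW le_ij];
  move: (psum_sub_bounds F_ge0 le_ij) (psum_sub_bounds G_ge0 le_ij);
  by move=> /andP[? ?] /andP[? ?]; lia.
Qed.

Theorem lemma7 (k n : nat) (hk : (1 <= k)%N) (hn : (1 <= n)%N)
    (d : n.-tuple 'I_k -> 'I_k) (s t : n.-tuple 'I_k) :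
  Dmax (fsub (psum (fadd (hist s) (indic (d s))))
             (psum (fadd (hist t) (indic (d t)))))
  <= (n + 1)%:Z.
Proof.
have hist_indic_ge0 (u : n.-tuple 'I_k) b l : 0 <= fadd (hist u) (indic b) l.
  by rewrite /fadd /hist /indic.
by apply: Dmax_psum_sub_le; rewrite // sum_hist_indic.
Qed.
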